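(* For all pairwise distinct $j,l,k\in\{1,\dots,M\}$, almost surely $$\big|\mathbb E\{g_{lk}(\boldsymbol X)-g_l(\boldsymbol X)-g_k(\boldsymbol X)\mid\boldsymbol X_{\mathcal X(\{l,j\})}\}\big|\le\frac{8\delta_0\sqrt{\mathbb E[f(\boldsymbol X)^2]}}{p_{\min}}.$$
   Context: Setup. $\boldsymbol X=(X_1,\dots,X_p)^\top$ is a random vector in $\{0,1\}^p$; $\{1,\dots,p\}$ is partitioned into disjoint nonempty feature groups $\mathcal X(1),\dots,\mathcal X(M)$; a group is either a single feature or has $\#\mathcal X(m)>1$ and consists of one-hot indicators ($\sum_{j\in\mathcal X(m)}\mathbf 1\{X_j=1\}=1$ a.s.). $\mathcal X(J)=\bigcup_{m\in J}\mathcal X(m)$; $\boldsymbol X_H=(X_j)_{j\in H}$, $\boldsymbol X_{-H}=(X_j)_{j\notin H}$. Conditional expectations given null events are set to $0$. $p_{\min}=\min_{1\le l<k\le M,\,i\in\mathcal X(l),\,j\in\mathcal X(k),\,(a,b)\in\{0,1\}^2}\mathbb P(X_i=a,X_j=b)>0$; $\delta_0=\max_{1\le m\le M}\inf\{\delta\ge0:\mathbb P(\max_{i\in\mathcal X(m)}|\mathbb P(X_i=1\mid\boldsymbol X_{-\mathcal X(m)})-\mathbb P(X_i=1)|\le\delta)=1\}$. For $f:\{0,1\}^p\to\mathbb R$ and $J\subset\{1,\dots,M\}$, $g_J(\boldsymbol X)=\mathbb E(f(\boldsymbol X)-\mathbb E(f(\boldsymbol X)\mid\boldsymbol X_{-\mathcal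 X(J)})\mid\boldsymbol X_{\mathcal X(J)})$, with $g_m=g_{\{m\}}$ and $g_{lk}=g_{\{l,k\}}$. *)

From mathcomp Require Import all_boot all_order all_algebra.
From mathcomp Require Import classical_sets reals.
Set Implicit Arguments. Unset Strict Implicit. Unset Printing Implicit Defensive.
Import Order.TTheory GRing.Theory Num.Theory.
Local Open Scope ring_scope.

Section Defs.
Variables (R : realType) (p M : nat).

Definition outcome := {ffun 'I_p -> bool}.

Variable P : outcome -> R.

Definition prob (A : pred outcome) : R := \sum_(x | A x) P x.
Definition expect (f : outcome -> R) : R := \sum_x P x * f x.

Definition agree (H : {set 'I_p}) (x y : outcome) : bool :=
  [forall i in H, x i == y i].

(* E(f(X) | X_H) evaluated at X = x; 0 on null conditioning events *)
Definition condexp (f : outcome -> R) (H : {set 'I_p}) (x : outcome) : R :=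
  let d := \sum_(y | agree H x y) P y in
  if d == 0 then 0 else (\sum_(y | agree H x y) P y * f y) / d.

Variable grp : 'I_p -> 'I_M.

Definition XJ (J : {set 'I_M}) : {set 'I_p} := [set i | grp i \in J].

Definition gJ (f : outcome -> R) (J : {set 'I_M}) (x : outcome) : R :=
  condexp (fun y => f y - condexp f (~: XJ J) y) (XJ J) x.

Definition pmin : R :=
  \big[Num.min/1]_(i : 'I_p) \big[Num.min/1]_(j : 'I_p | (grp i < grp j)%N)
    \big[Num.min/1]_(a : bool) \big[Num.min/1]_(b : bool)
      prob (fun x => (x i == a) && (x j == b)).

Definition delta_m (m : 'I_M) : R :=
  inf [set d : R | 0 <= d /\
    prob (fun x => [forall i : 'I_p, (grp i == m) ==>
       (`| condexp (fun y => (y i)%:R) (~: XJ [set m]) x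
           - prob (fun y => y i) | <= d)]) = 1].

Definition delta0 : R := \big[Num.max/0]_(m : 'I_M) delta_m m.

End Defs.

From mathcomp Require Import all_boot all_order all_algebra.
From mathcomp Require Import classical_sets reals.
From mathcomp Require Import ring lra.
Import Order.TTheory GRing.Theory Num.Theory.
Local Open Scope ring_scope.
Set Implicit Arguments. Unset Strict Implicit. Unset Printing Implicit Defensive.

(* With [g_J = E(f | X_J) - E(E(f | X_{-J}) | X_J)], the quantity to bound is a
   signed sum of five iterated conditional expectations of [f], each within
   [c * delta0 * ||f||_2 / p_min] of [E f] or of [E(f | X_l)], with c = 2, 2, 1, 1, 1.

   Everything rests on one observation: on the support, a cell of the partition
   by a feature group [m] is an event [X_i = b] for a single coordinate [i] of the
   group, so its conditional probability given the other features is within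
   [delta0] of its probability.  Hence a function [v] of [X_m] satisfies
   [|E(v | X_H) - E v| <= delta0 * (sum of |v| over the cells)] whenever [H] avoids
   [m], and that sum is at most [||v||_2 / p_min] because every cell of [m] meets
   every cell of another group with probability at least [p_min].  Dually, for a
   function [w] of the other features, [E(w | X_m) - E w] is the covariance of [w]
   with the indicator of a cell, at most [delta0 * ||w||_2], divided by the
   probability of that cell, at least [p_min]. *)

Section ConditionalExpectation.
Variables (R : realType) (p : nat) (P : outcome p -> R).
Hypothesis P_ge0 : forall x, 0 <= P x.
Hypothesis P_sum1 : \sum_x P x = 1.

Local Notation T := (outcome p).
Local Notation CE := (condexp P).
Local Notation E := (expect P).
Implicit Types (H : {set 'I_p}) (x y z : T) (f g h : T -> R).

Lemma agree_refl H x : agree H x x.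
Proof. by apply/forall_inP. Qed.

Lemma agree_sym H x y : agree H x y = agree H y x.
Proof. by apply/forall_inP/forall_inP => hxy i /hxy; rewrite eq_sym. Qed.

Lemma agree_trans H x y z : agree H x y -> agree H y z -> agree H x z.
Proof.
move=> /forall_inP hxy /forall_inP hyz; apply/forall_inP => i hi.
by rewrite (eqP (hxy i hi)) hyz.
Qed.

Lemma agree_subset H H' x y : H \subset H' -> agree H' x y -> agree H x y.
Proof.
move=> /fintype.subsetP sHH' /forall_inP hxy; apply/forall_inP => i /sHH'; exact: hxy.
Qed.

Lemma agreeU H1 H2 x y : agree (H1 :|: H2) x y = agree H1 x y && agree H2 x y.
Proof.
apply/idP/andP => [hxy|[h1 h2]].
  by split; apply: agree_subset hxy; [exact: finset.subsetUl | exact: finset.subsetUr].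
apply/forall_inP => i; rewrite finset.in_setU => /orP[].
  exact: (forall_inP h1).
exact: (forall_inP h2).
Qed.

Lemma agree_set0 x y : agree finset.set0 x y.
Proof. by apply/forall_inP => i; rewrite finset.in_set0. Qed.

Lemma eq_agree H x y : agree H x y -> agree H x =1 agree H y.
Proof.
move=> hxy z; apply/idP/idP; last exact: agree_trans.
by apply: agree_trans; rewrite agree_sym.
Qed.

Lemma big_agree (F : T -> R) H x y : agree H x y ->
  \sum_(z | agree H x z) F z = \sum_(z | agree H y z) F z.
Proof. by move/eq_agree => e; apply: eq_bigl. Qed.

Definition mass H x : R := \sum_(y | agree H x y) P y.

Definition depends_on H g := forall y z, agree H y z -> g y = g z.

Lemma mass_ge0 H x : 0 <= mass H x.
Proof. exact: sumr_ge0. Qed.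

Lemma P_le_mass H x : P x <= mass H x.
Proof. by rewrite /mass (bigD1 x) ?agree_refl //= lerDl sumr_ge0. Qed.

Lemma mass_gt0 H x : 0 < P x -> 0 < mass H x.
Proof. by move=> Px_gt0; apply: lt_le_trans (P_le_mass H x). Qed.

Lemma mass_le1 H x : mass H x <= 1.
Proof. by rewrite -P_sum1 [leRHS](bigID (agree H x)) /= lerDl sumr_ge0. Qed.

Lemma mass_set0 x : mass finset.set0 x = 1.
Proof. by rewrite -P_sum1; apply: eq_bigl => y; rewrite agree_set0. Qed.

Lemma depends_on_mass H : depends_on H (mass H).
Proof. by move=> y z /big_agree; apply. Qed.

Lemma depends_on_condexp f H : depends_on H (CE f H).
Proof. by move=> y z hyz; rewrite /condexp !(big_agree _ hyz). Qed.

Lemma condexpE f H x : CE f H x =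
  if mass H x == 0 then 0 else (\sum_(y | agree H x y) P y * f y) / mass H x.
Proof. by []. Qed.

Lemma condexp_pos f H x : 0 < mass H x ->
  CE f H x = (\sum_(y | agree H x y) P y * f y) / mass H x.
Proof. by move=> /lt0r_neq0 /negbTE m_neq0; rewrite condexpE m_neq0. Qed.

Lemma condexp_mass0 f H x : mass H x = 0 -> CE f H x = 0.
Proof. by move=> m0; rewrite condexpE m0 eqxx. Qed.

Lemma eq_condexp f g H x : (forall y, agree H x y -> P y != 0 -> f y = g y) ->
  CE f H x = CE g H x.
Proof.
move=> efg; rewrite !condexpE; congr (if _ then _ else _ / _).
apply: eq_bigr => y hy; have [->|Py_neq0] := eqVneq (P y) 0; first by rewrite !mul0r.
by rewrite efg.
Qed.

Lemma condexp_lin a b f g H x :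
  CE (fun y => a * f y + b * g y) H x = a * CE f H x + b * CE g H x.
Proof.
rewrite !condexpE; case: ifP => _; first by rewrite !mulr0 addr0.
rewrite !mulrA -mulrDl !mulr_sumr -big_split /=; congr (_ / _).
by apply: eq_bigr => y _; rewrite mulrDr !mulrA (mulrC a) (mulrC b).
Qed.

Lemma condexpB f g H x : CE (fun y => f y - g y) H x = CE f H x - CE g H x.
Proof.
rewrite -[CE f H x]mul1r -mulN1r -condexp_lin.
by apply: eq_condexp => y _ _; rewrite mul1r mulN1r.
Qed.

Lemma condexp_mull g f H x : depends_on H g ->
  CE (fun y => g y * f y) H x = g x * CE f H x.
Proof.
move=> gH; rewrite !condexpE; case: ifP => _; first by rewrite mulr0.
rewrite mulrA mulr_sumr; congr (_ / _); apply: eq_bigr => y hy.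
by rewrite (gH x y hy) mulrCA.
Qed.

Lemma condexp_cst c H x : 0 < mass H x -> CE (fun=> c) H x = c.
Proof.
move=> m_gt0; rewrite condexp_pos // -mulr_suml -/(mass H x) mulrAC.
by rewrite divff ?mul1r ?lt0r_neq0.
Qed.

Lemma condexp_id g H x : depends_on H g -> 0 < mass H x -> CE g H x = g x.
Proof.
move=> gH m_gt0; rewrite -[RHS]mulr1 -(condexp_cst 1 m_gt0) -condexp_mull //.
by apply: eq_condexp => y _ _; rewrite mulr1.
Qed.

Lemma norm_condexp_le g H x c : 0 < mass H x ->
  (forall y, agree H x y -> 0 < P y -> `|g y| <= c) -> `|CE g H x| <= c.
Proof.
move=> m_gt0 g_le; rewrite condexp_pos // normrM normfV (gtr0_norm m_gt0).
rewrite ler_pdivrMr // /mass mulr_sumr; apply: le_trans (ler_norm_sum _ _ _) _.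
apply: ler_sum => y hy; rewrite normrM (ger0_norm (P_ge0 y)) mulrC.
have [->|Py_neq0] := eqVneq (P y) 0; first by rewrite !mulr0.
by rewrite ler_pM2r ?g_le // lt0r Py_neq0 P_ge0.
Qed.

Lemma condexp_dist_le g H x c d : 0 < mass H x ->
  (forall y, agree H x y -> 0 < P y -> `|g y - c| <= d) -> `|CE g H x - c| <= d.
Proof.
move=> m_gt0 g_le; rewrite -[X in _ - X](condexp_cst c m_gt0) -condexpB.
exact: norm_condexp_le.
Qed.

Lemma condexp_ge0 g H x : (forall y, 0 <= g y) -> 0 <= CE g H x.
Proof.
move=> g_ge0; rewrite condexpE; case: ifP => // _.
by rewrite divr_ge0 ?mass_ge0 // sumr_ge0 // => y _; rewrite mulr_ge0.
Qed.

(* Each cell [c] of [X_H] is counted with total weight [\sum_(y in c) P y / P(c) = 1]. *)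
Lemma sum_by_cells H (w : T -> R) : (forall z, P z = 0 -> w z = 0) ->
  \sum_z w z = \sum_y P y / mass H y * \sum_(z | agree H y z) w z.
Proof.
move=> w0; under [RHS]eq_bigr do rewrite mulr_sumr big_mkcond /=.
rewrite exchange_big /=; apply: eq_bigr => z _; rewrite -big_mkcond /=.
rewrite (eq_bigl (agree H z)) => [|y]; last by rewrite agree_sym.
under eq_bigr => y hy do rewrite -(depends_on_mass hy).
rewrite -!mulr_suml -/(mass H z).
have [m0|m_neq0] := eqVneq (mass H z) 0; last by rewrite divff ?mul1r.
rewrite w0 ?mulr0 //.
by apply/eqP; rewrite eq_le P_ge0 andbT -m0 P_le_mass.
Qed.

Lemma sum_by_cells_mulr H (w g : T -> R) : (forall z, P z = 0 -> w z = 0) ->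
  depends_on H g ->
  \sum_z w z * g z = \sum_y P y / mass H y * g y * \sum_(z | agree H y z) w z.
Proof.
move=> w0 gH; rewrite (sum_by_cells H (w := fun z => w z * g z)); last first.
  by move=> z /w0 ->; rewrite mul0r.
apply: eq_bigr => y _; rewrite -[RHS]mulrA [in RHS]mulr_sumr; congr (_ * _).
by apply: eq_bigr => z hz; rewrite (gH y z hz) mulrC.
Qed.

Lemma condexp_tower f H H' x : H \subset H' -> CE (CE f H') H x = CE f H x.
Proof.
move=> sHH'; rewrite !condexpE; case: ifP => // _; congr (_ / _).
rewrite big_mkcond [RHS]big_mkcond /=.
rewrite (sum_by_cells H' (w := fun z => if agree H x z then P z * f z else 0)); last first.
  by move=> z ->; rewrite mul0r if_same.
apply: eq_bigr => y _.
have cellH : forall z, agree H' y z -> agree H x z = agree H x y.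
  by move=> z /(agree_subset sHH') hyz; rewrite agree_sym -(eq_agree hyz) agree_sym.
under eq_bigr => z hz do rewrite (cellH z hz).
case: ifP => _; last by rewrite big1 ?mulr0.
rewrite condexpE; case: ifP => [/eqP m0|_]; last by rewrite mulrA mulrAC.
suff -> : P y = 0 by rewrite !mul0r.
by apply/eqP; rewrite eq_le P_ge0 andbT -m0 P_le_mass.
Qed.

Lemma condexp_set0 f x : CE f finset.set0 x = E f.
Proof.
rewrite condexpE mass_set0 oner_eq0 divr1.
by apply: eq_bigl => y; rewrite agree_set0.
Qed.

Lemma expect_condexp f H : E (CE f H) = E f.
Proof.
pose x0 : T := [ffun=> false].
by rewrite -(condexp_set0 _ x0) condexp_tower ?finset.sub0set // condexp_set0.
Qed.

Lemma expect_le f g : (forall y, f y <= g y) -> E f <= E g.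
Proof. by move=> fg; apply: ler_sum => y _; apply: ler_wpM2l. Qed.

Lemma expect_mull_condexp w g H : depends_on H w ->
  E (fun z => w z * g z) = E (fun z => w z * CE g H z).
Proof.
by move=> wH; rewrite -(expect_condexp _ H); apply: eq_bigr => z _; rewrite condexp_mull.
Qed.

Lemma condexp_var f H x : 0 < mass H x ->
  CE (fun y => (f y - CE f H x) ^+ 2) H x = CE (fun y => f y ^+ 2) H x - CE f H x ^+ 2.
Proof.
move=> m_gt0; set c := CE f H x.
rewrite (eq_condexp (g := fun y => 1 * f y ^+ 2 + 1 * (- (2 * c) * f y + c ^+ 2 * 1))).
  rewrite !condexp_lin condexp_cst // -/c; ring.
by move=> y _ _; rewrite sqrrB; ring.
Qed.

Lemma condexp_sqr_le f H x : CE f H x ^+ 2 <= CE (fun y => f y ^+ 2) H x.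
Proof.
have [m_gt0|m_le0] := ltrP 0 (mass H x); last first.
  have m0 : mass H x = 0 by apply/eqP; rewrite eq_le m_le0 mass_ge0.
  by rewrite !condexp_mass0 // expr0n.
by rewrite -subr_ge0 -condexp_var // condexp_ge0 // => y; apply: sqr_ge0.
Qed.

Lemma expect_sqr_le f : E f ^+ 2 <= E (fun y => f y ^+ 2).
Proof.
pose x0 : T := [ffun=> false].
by rewrite -!(condexp_set0 _ x0) condexp_sqr_le.
Qed.

Lemma expect_centered_sqr_le f :
  E (fun y => (f y - E f) ^+ 2) <= E (fun y => f y ^+ 2).
Proof.
pose x0 : T := [ffun=> false].
have m_gt0 : 0 < mass finset.set0 x0 by rewrite mass_set0 ltr01.
by rewrite -!(condexp_set0 _ x0) condexp_var // lerBlDr lerDl sqr_ge0.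
Qed.

Definition norm2 f : R := Num.sqrt (E (fun y => f y ^+ 2)).

Lemma norm2_condexp_le f H : norm2 (CE f H) <= norm2 f.
Proof.
apply: ler_wsqrtr; rewrite -[leRHS](expect_condexp _ H).
by apply: expect_le => y; apply: condexp_sqr_le.
Qed.

Lemma norm2_center_le f : norm2 (fun y => f y - E f) <= norm2 f.
Proof. exact/ler_wsqrtr/expect_centered_sqr_le. Qed.

Lemma norm_expect_le_norm2 f : `|E f| <= norm2 f.
Proof. by rewrite -sqrtr_sqr; apply/ler_wsqrtr/expect_sqr_le. Qed.

Lemma norm2_le f g : (forall y, `|f y| <= `|g y|) -> norm2 f <= norm2 g.
Proof.
move=> fg; apply/ler_wsqrtr/expect_le => y.
rewrite -(real_normK (num_real (f y))) -(real_normK (num_real (g y))).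
by apply: lerXn2r; rewrite ?nnegrE ?normr_ge0.
Qed.

Lemma sum_abs_le_norm2 (A : pred T) f :
  \sum_(z | A z) P z * `|f z| <= norm2 f.
Proof.
have -> : \sum_(z | A z) P z * `|f z| = E (fun z => if A z then `|f z| else 0).
  by rewrite big_mkcond; apply: eq_bigr => z _; case: (A z); rewrite ?mulr0.
apply: le_trans (ler_norm _) _; apply: le_trans (norm_expect_le_norm2 _) _.
by apply: norm2_le => z; case: (A z); rewrite ?normr_id ?normr0.
Qed.

Lemma condexp_sub_expect f H x : 0 < mass H x ->
  CE f H x - E f = E (fun z => (f z - E f) * (agree H x z)%:R) / mass H x.
Proof.
move=> m_gt0; rewrite condexp_pos //.
have -> : E (fun z => (f z - E f) * (agree H x z)%:R) =
    \sum_(z | agree H x z) P z * f z - E f * mass H x.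
  rewrite /expect /mass mulr_sumr big_mkcond [X in _ = X - _]big_mkcond.
  rewrite [X in _ = _ - X]big_mkcond -sumrB /=.
  by apply: eq_bigr => z _; case: (agree H x z) => /=; ring.
by field; rewrite lt0r_neq0.
Qed.

Lemma condexp_01 g H x : (forall y, 0 <= g y <= 1) -> 0 <= CE g H x <= 1.
Proof.
move=> g01; rewrite condexp_ge0 => [|y]; last by case/andP: (g01 y).
have [m_gt0|m_le0] := ltrP 0 (mass H x); last first.
  by rewrite condexp_mass0 ?ler01 //; apply/eqP; rewrite eq_le m_le0 mass_ge0.
apply: le_trans (ler_norm _) _; apply: norm_condexp_le => // y _ _.
by case/andP: (g01 y) => g_ge0 g_le1; rewrite ger0_norm.
Qed.

Lemma expect_mul_dist_le F K c d : (forall z, 0 < P z -> `|K z - c| <= d) ->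
  `|E (fun z => F z * K z) - c * E F| <= d * \sum_z P z * `|F z|.
Proof.
move=> K_near; have -> : E (fun z => F z * K z) - c * E F = \sum_z P z * F z * (K z - c).
  by rewrite /expect mulr_sumr -sumrB; apply: eq_bigr => z _; ring.
apply: le_trans (ler_norm_sum _ _ _) _; rewrite mulr_sumr; apply: ler_sum => z _.
rewrite !normrM (ger0_norm (P_ge0 z)) mulrC.
have [->|Pz_neq0] := eqVneq (P z) 0; first by rewrite !(mul0r, mulr0).
by rewrite ler_wpM2r ?mulr_ge0 // K_near // lt0r Pz_neq0 P_ge0.
Qed.

Lemma expect_center f : E (fun z => f z - E f) = 0.
Proof.
rewrite /expect (eq_bigr (fun z => P z * f z - E f * P z)); last first.
  by move=> z _; rewrite mulrBr [_ * P z]mulrC.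
by rewrite sumrB -mulr_sumr P_sum1 mulr1 subrr.
Qed.

Lemma prob_ge0 (A : pred T) : 0 <= prob P A.
Proof. exact: sumr_ge0. Qed.

Lemma prob_le1 (A : pred T) : prob P A <= 1.
Proof. by rewrite -P_sum1 [leRHS](bigID A) /= lerDl sumr_ge0. Qed.

Lemma prob_le (A B : pred T) : (forall t, A t -> B t) -> prob P A <= prob P B.
Proof.
move=> AB; rewrite /prob [leRHS](bigID A) /= (eq_bigl A) ?lerDl ?sumr_ge0 // => t.
by case At: (A t); rewrite ?andbT ?andbF // AB.
Qed.

Lemma eq_prob_supp (A B : pred T) : (forall t, 0 < P t -> A t = B t) ->
  prob P A = prob P B.
Proof.
move=> AB; rewrite /prob big_mkcond [RHS]big_mkcond; apply: eq_bigr => t _.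
have [Pt_gt0|Pt_le0] := ltrP 0 (P t); first by rewrite AB.
suff -> : P t = 0 by rewrite !if_same.
by apply/eqP; rewrite eq_le Pt_le0 P_ge0.
Qed.

Lemma prob1_supp (A : pred T) y : prob P A = 1 -> 0 < P y -> A y.
Proof.
move=> PA1 Py_gt0; apply/negPn/negP => nAy.
have : \sum_(t | ~~ A t) P t = 0.
  by apply: (addrI 1); rewrite addr0 -{1}PA1 -P_sum1 [RHS](bigID A).
move/eqP; rewrite psumr_eq0 // => /allP /(_ y (mem_index_enum y)).
by rewrite nAy implyTb (gt_eqF Py_gt0).
Qed.


Lemma condexp_sub_expect_le f H x c q : 0 < q -> q <= mass H x ->
  `|E (fun z => (f z - E f) * (agree H x z)%:R)| <= c -> `|CE f H x - E f| <= c / q.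
Proof.
move=> q_gt0 q_le_m le_c; have m_gt0 := lt_le_trans q_gt0 q_le_m.
have c_ge0 := le_trans (normr_ge0 _) le_c.
rewrite condexp_sub_expect // normrM normfV (gtr0_norm m_gt0) ler_pdivrMr //.
apply: le_trans le_c _; rewrite -mulrA -[leLHS]mulr1.
by rewrite ler_wpM2l // ler_pdivlMl ?mulr1.
Qed.

Section FeatureGroups.
Variables (M : nat) (grp : 'I_p -> 'I_M).
Hypothesis grp_surj : forall m : 'I_M, exists i : 'I_p, grp i = m.
Hypothesis grp_onehot : forall m : 'I_M, (1 < #|[set i | grp i == m]|)%N ->
  prob P (fun x => #|[set i | (grp i == m) && x i]| == 1%N) = 1.

Local Notation G m := (XJ grp [set m]).
Local Notation delta := (delta0 P grp).
Implicit Types (m : 'I_M).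

Lemma in_group m i : (i \in G m) = (grp i == m).
Proof. by rewrite inE finset.in_set1. Qed.

Lemma onehot_supp m z : (1 < #|[set i | grp i == m]|)%N -> 0 < P z ->
  exists2 i, grp i = m & forall i', grp i' = m -> z i' = (i' == i).
Proof.
move=> /grp_onehot /prob1_supp onehot /onehot /cards1P [i Sz].
have : i \in [set i | (grp i == m) && z i] by rewrite Sz finset.set11.
rewrite inE => /andP[/eqP gi zi]; exists i => // i' gi'.
have : (i' \in [set i | (grp i == m) && z i]) = (i' == i) by rewrite Sz inE.
by rewrite inE gi' eqxx.
Qed.

(* On the support, the cell of [y] for group [m] is the event [X_i = y_i] for
   a single coordinate [i] of the group: the group itself if it is a single
   feature, the active indicator of [y] if it is one-hot. *)
Lemma cell_coordinate m y : 0 < P y ->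
  exists2 i, grp i = m & forall z, 0 < P z -> agree (G m) y z = (y i == z i).
Proof.
move=> Py_gt0; have [i0 gi0] := grp_surj m.
have card_gt0 : (0 < #|[set i | grp i == m]|)%N.
  by apply/card_gt0P; exists i0; rewrite inE gi0.
case: (ltngtP #|[set i | grp i == m]| 1) => [|card_gt1|/eqP /cards1P [i Sm]].
- by rewrite ltnS leqn0 => /eqP card0; rewrite card0 in card_gt0.
- have [i gi yi] := onehot_supp card_gt1 Py_gt0.
  exists i => // z Pz_gt0; have [i' gi' zi'] := onehot_supp card_gt1 Pz_gt0.
  rewrite yi // zi' // eqxx eq_sym eqb_id; apply/forall_inP/eqP => [/(_ i)|ii' k].
    by rewrite in_group gi yi // zi' // !eqxx eq_sym eqb_id => /(_ isT) /eqP ->.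
  by rewrite in_group => /eqP gk; rewrite yi // zi' // ii' eqxx.
- have gi : grp i = m.
    by apply/eqP; have := finset.set11 i; rewrite -Sm inE.
  exists i => // z _; apply/forall_inP/idP => [|yz k]; first by apply; rewrite in_group gi.
  rewrite in_group => gk; have : k \in [set i | grp i == m] by rewrite inE.
  by rewrite Sm finset.in_set1 => /eqP ->.
Qed.

Lemma delta0_ge0 : 0 <= delta.
Proof. exact: bigmax_ge_id. Qed.

Lemma coordinate_dist_le m i z : grp i = m -> 0 < P z ->
  `|CE (fun y => (y i)%:R) (~: G m) z - prob P (fun y => y i)| <= delta.
Proof.
move=> gi Pz_gt0; apply: le_trans (le_bigmax _ _ m); apply: lb_le_inf.
  exists 1; split; first exact: ler01.
  rewrite (eq_prob_supp (B := predT)) // => t _; apply/forallP => i'; apply/implyP => _.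
  have /andP[CE_ge0 CE_le1] : 0 <= CE (fun y => (y i')%:R) (~: G m) t <= 1.
    by apply: condexp_01 => y; case: (y i'); rewrite ?ler01 ?lexx.
  have := prob_ge0 (fun y => y i'); have := prob_le1 (fun y => y i').
  by rewrite ler_norml; lra.
move=> d [_ /prob1_supp /(_ Pz_gt0) /forallP /(_ i) /implyP]; apply.
by rewrite gi.
Qed.

(* The cell of [y] is [X_i = y_i] (by [cell_coordinate]): [X_i = 1] or its complement. *)
Lemma cell_condexp_dist_le m y z : 0 < P y -> 0 < P z ->
  `|CE (fun t => (agree (G m) y t)%:R) (~: G m) z - mass (G m) y| <= delta.
Proof.
move=> Py_gt0 Pz_gt0; have [i gi cell_i] := cell_coordinate m Py_gt0.
rewrite (eq_condexp (g := fun t => (y i == t i)%:R)); last first.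
  by move=> t _ Pt_neq0; rewrite cell_i // lt0r Pt_neq0 P_ge0.
rewrite [mass _ _](eq_prob_supp (B := fun t => y i == t i)) //.
have dist_i := coordinate_dist_le gi Pz_gt0.
case: (y i).
  rewrite (eq_condexp (g := fun t => (t i)%:R)) => [|t _ _]; last by case: (t i).
  by rewrite (eq_prob_supp (B := fun t => t i)) // => t _; case: (t i).
rewrite (eq_condexp (g := fun t => 1 * 1 + (-1) * (t i)%:R)); last first.
  by move=> t _ _; case: (t i); rewrite /= ?mul1r ?mulN1r ?subrr ?subr0.
rewrite condexp_lin condexp_cst ?mass_gt0 //.
have -> : prob P (fun t => false == t i) = 1 - prob P (fun t => t i).
  by rewrite -P_sum1 /prob [X in X - _](bigID (fun t : T => t i)) /= addrC addrK.
by move: dist_i; rewrite !ler_norml; lra.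
Qed.

Lemma pmin_le i j a b : (grp i < grp j)%N ->
  pmin P grp <= prob P (fun t => (t i == a) && (t j == b)).
Proof.
move=> gij; apply: le_trans (bigmin_le _ i _) _.
apply: le_trans (bigmin_le_cond _ _ gij) _.
exact: le_trans (bigmin_le _ a _) (bigmin_le _ b _).
Qed.

Lemma pmin_le_cellI a b x y : a != b -> 0 < P x -> 0 < P y ->
  pmin P grp <= prob P (fun t => agree (G a) x t && agree (G b) y t).
Proof.
move=> ab Px_gt0 Py_gt0.
have [i gi cell_i] := cell_coordinate a Px_gt0.
have [j gj cell_j] := cell_coordinate b Py_gt0.
rewrite (eq_prob_supp (B := fun t => (t i == x i) && (t j == y j))); last first.
  by move=> t Pt_gt0; rewrite cell_i // cell_j // ![_ == t _]eq_sym.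
case: (ltngtP (grp i) (grp j)) => [gij|gji|/val_inj gij]; first exact: pmin_le.
  rewrite (eq_prob_supp (B := fun t => (t j == y j) && (t i == x i))) ?pmin_le //.
  by move=> t _; rewrite andbC.
by move: ab; rewrite -gi -gj gij eqxx.
Qed.

Lemma pmin_le_mass a b y : a != b -> 0 < P y -> pmin P grp <= mass (G b) y.
Proof.
move=> ab Py_gt0; apply: le_trans (pmin_le_cellI ab Py_gt0 Py_gt0) _.
by apply: prob_le => t /andP[].
Qed.

(* When [g] depends only on [X_(G m)], this is the sum of its values over the cells. *)
Definition cell_sum m g : R := \sum_y P y / mass (G m) y * g y.

Lemma condexp_sub_expect_cells m H v x : depends_on (G m) v -> 0 < mass H x ->
  CE v H x - E v = \sum_y P y / mass (G m) y * v y *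
    (CE (fun t => (agree (G m) y t)%:R) H x - mass (G m) y).
Proof.
move=> vGm m_gt0.
have -> : CE v H x - E v = \sum_z P z * ((agree H x z)%:R / mass H x - 1) * v z.
  rewrite condexp_pos // /expect mulr_suml big_mkcond /= -sumrB.
  by apply: eq_bigr => z _; case: (agree H x z) => /=; ring.
rewrite (sum_by_cells_mulr (H := G m)) //; last by move=> z ->; rewrite !mul0r.
apply: eq_bigr => y _; congr (_ * _).
rewrite condexp_pos // mulr_suml /mass big_mkcond [X in _ = X - _]big_mkcond.
rewrite [X in _ = _ - X]big_mkcond -sumrB /=; apply: eq_bigr => z _.
by case: (agree H x z); case: (agree (G m) y z) => /=; ring.
Qed.

Lemma condexp_dist_le_cell_sum m H v x : H \subset ~: G m -> depends_on (G m) v ->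
  0 < P x -> `|CE v H x - E v| <= delta * cell_sum m (fun y => `|v y|).
Proof.
move=> sH vGm Px_gt0; have m_gt0 := mass_gt0 H Px_gt0.
rewrite (condexp_sub_expect_cells vGm m_gt0) /cell_sum mulr_sumr.
apply: le_trans (ler_norm_sum _ _ _) _; apply: ler_sum => y _.
have [->|Py_neq0] := eqVneq (P y) 0; first by rewrite !mul0r normr0 mulr0.
have Py_gt0 : 0 < P y by rewrite lt0r Py_neq0 P_ge0.
have cell_le : `|CE (fun t => (agree (G m) y t)%:R) H x - mass (G m) y| <= delta.
  rewrite -(condexp_tower _ _ sH); apply: condexp_dist_le => // t _ Pt_gt0.
  exact: cell_condexp_dist_le.
rewrite 2!normrM (ger0_norm (divr_ge0 (P_ge0 y) (mass_ge0 _ _))) [leRHS]mulrC.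
by apply: ler_wpM2l cell_le; rewrite mulr_ge0 ?divr_ge0 ?mass_ge0.
Qed.

Lemma pmin_cell_sum_le m S x g : depends_on (G m) g -> (forall y, 0 <= g y) ->
  (forall y, 0 < P y -> pmin P grp <= prob P (fun t => agree S x t && agree (G m) y t)) ->
  pmin P grp * cell_sum m g <= \sum_(z | agree S x z) P z * g z.
Proof.
move=> gGm g_ge0 pmin_le_cell.
rewrite big_mkcond (eq_bigr (fun z => (agree S x z)%:R * P z * g z)); last first.
  by move=> z _; case: (agree S x z); rewrite ?mul1r ?mul0r.
rewrite (sum_by_cells_mulr (H := G m)) //; last by move=> z ->; rewrite mulr0.
rewrite /cell_sum mulr_sumr; apply: ler_sum => y _.
have [->|Py_neq0] := eqVneq (P y) 0; first by rewrite !mul0r mulr0.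
have Py_gt0 : 0 < P y by rewrite lt0r Py_neq0 P_ge0.
rewrite mulrC; apply: ler_wpM2l; first by rewrite mulr_ge0 ?divr_ge0 ?mass_ge0.
suff -> : \sum_(z | agree (G m) y z) (agree S x z)%:R * P z =
    prob P (fun t => agree S x t && agree (G m) y t) by exact: pmin_le_cell.
rewrite /prob big_mkcond [RHS]big_mkcond /=; apply: eq_bigr => z _.
by case: (agree S x z); case: (agree (G m) y z); rewrite /= ?mul1r ?mul0r.
Qed.

Lemma expect_mul_cell_dist_le m w y : depends_on (~: G m) w -> 0 < P y ->
  `|E (fun z => w z * (agree (G m) y z)%:R) - mass (G m) y * E w|
    <= delta * \sum_z P z * `|w z|.
Proof.
move=> wGm Py_gt0; rewrite (expect_mull_condexp _ wGm).
by apply: expect_mul_dist_le => z Pz_gt0; apply: cell_condexp_dist_le.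
Qed.

Lemma expect_centered_mul_cell_le m w y : depends_on (~: G m) w -> 0 < P y ->
  `|E (fun z => (w z - E w) * (agree (G m) y z)%:R)| <= delta * norm2 w.
Proof.
move=> wGm Py_gt0; set g := fun z => w z - E w.
have gGm : depends_on (~: G m) g by move=> s t st; rewrite /g (wGm s t st).
have := expect_mul_cell_dist_le gGm Py_gt0; rewrite expect_center mulr0 subr0 => le_g.
apply: le_trans le_g _; rewrite ler_wpM2l ?delta0_ge0 //.
exact: le_trans (sum_abs_le_norm2 predT g) (norm2_center_le w).
Qed.

Lemma XJ_pair a b : XJ grp [set a; b] = G a :|: G b.
Proof. by apply/setP => i; rewrite !inE. Qed.

Lemma group_sub_compl a b : a != b -> G a \subset ~: G b.
Proof. by move=> ab; apply/fintype.subsetP => i; rewrite !inE => /eqP ->. Qed.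

Section PositivePmin.
Hypothesis pmin_gt0 : 0 < pmin P grp.

Local Notation bound f := (delta * norm2 f / pmin P grp).

Lemma bound_le f g : norm2 f <= norm2 g -> bound f <= bound g.
Proof.
move=> fg; apply: ler_wpM2r; first by rewrite invr_ge0 ltW.
exact: ler_wpM2l delta0_ge0 _ _ fg.
Qed.

Lemma condexp_dist_le_bound m H v f x : H \subset ~: G m -> depends_on (G m) v ->
  0 < P x -> pmin P grp * cell_sum m (fun y => `|v y|) <= norm2 f ->
  `|CE v H x - E v| <= bound f.
Proof.
move=> sH vGm Px_gt0 le_f; apply: le_trans (condexp_dist_le_cell_sum sH vGm Px_gt0) _.
by rewrite -mulrA ler_wpM2l ?delta0_ge0 // ler_pdivlMr // mulrC.
Qed.

(* Freezing the [G a]-coordinates of [x] turns [E(f | X_(G a), X_(G b))] into a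
   function of [X_(G b)] alone, to which [condexp_dist_le_bound] applies. *)
Lemma condexp_condexp_pair_dist_le a b c f x : a != b -> c != b -> 0 < P x ->
  `|CE (CE f (XJ grp [set a; b])) (XJ grp [set a; c]) x - CE f (G a) x| <= 2 * bound f.
Proof.
move=> ab cb Px_gt0; rewrite !XJ_pair; set h := CE f (G a :|: G b).
pose v y := h [ffun i => if i \in G a then x i else y i].
have ab_compl := group_sub_compl ab.
have h_v z : agree (G a) x z -> h z = v z.
  move=> xz; apply: depends_on_condexp; apply/forall_inP => i _; rewrite ffunE.
  by case: ifP => [/(forall_inP xz)|]; rewrite // eq_sym.
have vGb : depends_on (G b) v.
  move=> y y' yy'; apply: depends_on_condexp; apply/forall_inP => i.
  rewrite finset.in_setU !ffunE; case: ifP => //= _; exact: (forall_inP yy').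
have le_f : pmin P grp * cell_sum b (fun y => `|v y|) <= norm2 f.
  apply: le_trans (pmin_cell_sum_le (S := G a) (x := x) _ _ _) _.
  - by move=> y y' /vGb ->.
  - by move=> y; apply: normr_ge0.
  - by move=> y Py_gt0; apply: pmin_le_cellI.
  rewrite -(eq_bigr _ (fun z xz => congr1 (fun t => P z * `|t|) (h_v z xz))).
  exact: le_trans (sum_abs_le_norm2 _ _) (norm2_condexp_le _ _).
have hac : G a :|: G c \subset ~: G b by rewrite finset.subUset ab_compl group_sub_compl.
rewrite (eq_condexp (g := v)) => [|z xz _]; last first.
  by apply/h_v/(agree_subset _ xz)/finset.subsetUl.
rewrite -(condexp_tower f x (finset.subsetUl (G a) (G b))) -/h.
rewrite (eq_condexp (g := v) (H := G a)) => [|z xz _]; last exact: h_v.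
apply: le_trans (ler_distD (E v) _ _) _; rewrite mulr2n mulrDl mul1r [X in _ + X]distrC.
by apply: lerD; apply: (condexp_dist_le_bound _ vGb).
Qed.

Lemma condexp_condexp_group_dist_le a b c f x : a != b -> c != b -> 0 < P x ->
  `|CE (CE f (G b)) (XJ grp [set a; c]) x - E f| <= bound f.
Proof.
move=> ab cb Px_gt0; rewrite XJ_pair -(expect_condexp f (G b)).
apply: condexp_dist_le_bound _ (depends_on_condexp f (H := G b)) Px_gt0 _.
  by rewrite finset.subUset !group_sub_compl.
apply: le_trans (pmin_cell_sum_le (S := finset.set0) (x := x) _ _ _) _.
- by move=> y y' /depends_on_condexp ->.
- by move=> y; apply: normr_ge0.
- move=> y Py_gt0; apply: le_trans (pmin_le_mass ab Py_gt0) _.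
  by apply: prob_le => t; rewrite agree_set0.
exact: le_trans (sum_abs_le_norm2 _ _) (norm2_condexp_le _ _).
Qed.

Lemma condexp_group_dist_le a b w y : a != b -> depends_on (~: G b) w -> 0 < P y ->
  `|CE w (G b) y - E w| <= bound w.
Proof.
move=> ab wGb Py_gt0; apply: condexp_sub_expect_le => //.
  exact: pmin_le_mass ab Py_gt0.
exact: expect_centered_mul_cell_le.
Qed.

Lemma condexp_pair_dist_le a b u x : a != b -> depends_on (~: (G a :|: G b)) u ->
  0 < P x -> `|CE u (G a :|: G b) x - E u| <= 2 * bound u.
Proof.
move=> ab uGab Px_gt0; rewrite mulrA; apply: condexp_sub_expect_le => //.
  apply: le_trans (pmin_le_cellI ab Px_gt0 Px_gt0) _.
  by apply: prob_le => t; rewrite agreeU.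
have compl_a : ~: (G a :|: G b) \subset ~: G a by rewrite finset.setCS finset.subsetUl.
have compl_b : ~: (G a :|: G b) \subset ~: G b by rewrite finset.setCS finset.subsetUr.
pose F z := (u z - E u) * (agree (G b) x z)%:R.
have FGa : depends_on (~: G a) F.
  move=> s t st; rewrite /F (uGab s t (agree_subset compl_a st)).
  have ba_compl : G b \subset ~: G a by rewrite group_sub_compl // eq_sym.
  by rewrite agree_sym (eq_agree (agree_subset ba_compl st)) agree_sym.
have uGb : depends_on (~: G b) u by move=> s t /(agree_subset compl_b) /uGab.
have -> : E (fun z => (u z - E u) * (agree (G a :|: G b) x z)%:R) =
    E (fun z => F z * (agree (G a) x z)%:R).
  apply: eq_bigr => z _; rewrite /F agreeU.
  by case: (agree (G a) x z); case: (agree (G b) x z); rewrite /= ?mulr1 ?mulr0.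
rewrite -[X in `|X|](subrK (mass (G a) x * E F)) mulr2n mulrDl mul1r addrC.
apply: le_trans (ler_normD _ _) _; apply: lerD.
  rewrite normrM ger0_norm ?mass_ge0 //.
  apply: le_trans (ler_wpM2r (normr_ge0 _) (mass_le1 _ _)) _.
  by rewrite mul1r; apply: expect_centered_mul_cell_le.
apply: le_trans (expect_mul_cell_dist_le FGa Px_gt0) _; rewrite ler_wpM2l ?delta0_ge0 //.
apply: le_trans (norm2_center_le u); apply: le_trans (sum_abs_le_norm2 predT _).
apply: ler_sum => z _; apply: ler_wpM2l => //; rewrite /F normrM.
by case: (agree (G b) x z); rewrite /= ?normr1 ?normr0 ?mulr1 ?mulr0.
Qed.

Lemma condexp_compl_group_dist_le a b f y : a != b -> 0 < P y ->
  `|CE (CE f (~: G b)) (G b) y - E f| <= bound f.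
Proof.
move=> ab Py_gt0; rewrite -(expect_condexp f (~: G b)).
apply: le_trans (condexp_group_dist_le ab (depends_on_condexp _ (H := _)) Py_gt0) _.
exact/bound_le/norm2_condexp_le.
Qed.

Lemma condexp_compl_pair_dist_le a b f x : a != b -> 0 < P x ->
  `|CE (CE f (~: XJ grp [set a; b])) (XJ grp [set a; b]) x - E f| <= 2 * bound f.
Proof.
move=> ab Px_gt0; rewrite XJ_pair -(expect_condexp f (~: (G a :|: G b))).
apply: le_trans (condexp_pair_dist_le ab (depends_on_condexp _ (H := _)) Px_gt0) _.
by apply/ler_wpM2l/bound_le/norm2_condexp_le; rewrite ler0n.
Qed.

Lemma condexp_gJ f J H x : CE (gJ P grp f J) H x =
  CE (CE f (XJ grp J)) H x - CE (CE (CE f (~: XJ grp J)) (XJ grp J)) H x.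
Proof. by rewrite -condexpB; apply: eq_condexp => y _ _; rewrite /gJ condexpB. Qed.

Lemma condexp_interaction_le f j l k x : j != l -> j != k -> l != k -> 0 < P x ->
  `|CE (fun y => gJ P grp f [set l; k] y - gJ P grp f [set l] y - gJ P grp f [set k] y)
       (XJ grp [set l; j]) x| <= 7 * bound f.
Proof.
move=> jl jk lk Px_gt0; have kl : k != l by rewrite eq_sym.
have lj_gt0 := mass_gt0 (XJ grp [set l; j]) Px_gt0.
have gl_lj : CE (gJ P grp f [set l]) (XJ grp [set l; j]) x = gJ P grp f [set l] x.
  apply: condexp_id lj_gt0 => y z yz; apply: depends_on_condexp.
  by apply: agree_subset yz; rewrite XJ_pair finset.subsetUl.
rewrite !condexpB gl_lj !condexp_gJ {1}/gJ condexpB.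
have b1 := condexp_condexp_pair_dist_le f lk jk Px_gt0.
have b2 : `|CE (CE (CE f (~: XJ grp [set l; k])) (XJ grp [set l; k]))
                (XJ grp [set l; j]) x - E f| <= 2 * bound f.
  by apply: condexp_dist_le => // t _; apply: condexp_compl_pair_dist_le.
have b3 := condexp_compl_group_dist_le f kl Px_gt0.
have b4 := condexp_condexp_group_dist_le f lk jk Px_gt0.
have b5 : `|CE (CE (CE f (~: G k)) (G k)) (XJ grp [set l; j]) x - E f| <= bound f.
  by apply: condexp_dist_le => // t _; apply: condexp_compl_group_dist_le lk.
move: b1 b2 b3 b4 b5; rewrite !ler_norml; lra.
Qed.

End PositivePmin.

End FeatureGroups.

End ConditionalExpectation.

Theorem lemma4 (R : realType) (p M : nat) (P : outcome p -> R)
  (grp : 'I_p -> 'I_M) (f : outcome p -> R)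
  (P_ge0 : forall x, 0 <= P x)
  (P_sum1 : \sum_x P x = 1)
  (grp_surj : forall m : 'I_M, exists i : 'I_p, grp i = m)
  (grp_onehot : forall m : 'I_M, (1 < #|[set i | grp i == m]|)%N ->
      prob P (fun x => #|[set i | (grp i == m) && x i]| == 1%N) = 1)
  (pmin_gt0 : 0 < pmin P grp)
  (j l k : 'I_M) (hjl : j != l) (hjk : j != k) (hlk : l != k) :
  forall x : outcome p, 0 < P x ->
    `| condexp P (fun y => gJ P grp f [set l; k] y - gJ P grp f [set l] y
                           - gJ P grp f [set k] y)
               (XJ grp [set l; j]) x |
    <= 8 * delta0 P grp * Num.sqrt (expect P (fun y => f y ^+ 2)) / pmin P grp.
Proof.
move=> x Px_gt0.
have := condexp_interaction_le P_ge0 P_sum1 grp_surj grp_onehot pmin_gt0 f hjl hjk hlk Px_gt0.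
move/le_trans; apply; rewrite -!mulrA ler_wpM2r ?ler_nat //.
by rewrite mulr_ge0 ?divr_ge0 ?sqrtr_ge0 ?delta0_ge0 ?ltW.
Qed.
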